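(* For every integer $n>0$, the diffeological space $\mathbb{TD}^n$ is not reflexive: there is a parametrization $f:(-1,1)\to\mathbb{TD}^n$ such that $g\circ f$ is smooth for every smooth function $g:\mathbb{TD}^n\to\mathbb{R}$, but $f$ is not a plot of $\mathbb{TD}^n$.
   Context: Define $\pi^n_{set}:\mathbb{R}^n\to\mathbb{R}^n$ by $\pi^n_{set}(v)=v$ if $\|v\|\le1$ and $\pi^n_{set}(v)=v/\|v\|$ if $\|v\|\ge1$. Let $\mathbb{TD}^n=\mathbb{R}^n/\!\sim$, where $v\sim w$ iff $\pi^n_{set}(v)=\pi^n_{set}(w)$, equipped with the quotient diffeology from $\mathbb{R}^n$ (so the projection $\pi_n:\mathbb{R}^n\to\mathbb{TD}^n$ is a subduction). A parametrization is a map from an open subset of a Euclidean space; a diffeological space is reflexive if every parametrization $P$ such that $g\circ P$ is smooth for all smooth $g$ into $\mathbb{R}$ is a plot. *)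

From HB Require Import structures.
From mathcomp Require Import all_boot all_order all_algebra.
From mathcomp Require Import all_classical all_reals topology normedtype derive.
Set Implicit Arguments. Unset Strict Implicit. Unset Printing Implicit Defensive.
Import Order.TTheory GRing.Theory Num.Theory.
Import numFieldNormedType.Exports.
Local Open Scope classical_set_scope.
Local Open Scope ring_scope.

Section Diffeology.
Variable R : realType.

Fixpoint Ck (V W : normedModType R) (m : nat) (U : set V) (f : V -> W) : Prop :=
  match m with
  | 0 => forall x, U x -> {for x, continuous f}
  | m'.+1 => (forall x, U x -> differentiable f x) /\
             (forall v : V, Ck m' U (fun x => 'D_v f x))
  end.

Definition smooth_on (V W : normedModType R) (U : set V) (f : V -> W) : Prop :=
  forall m, Ck m U f.

Definition enorm n (v : 'rV[R]_n) : R := Num.sqrt (\sum_(i < n) v 0 i ^+ 2).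

Definition pi_set n (v : 'rV[R]_n) : 'rV[R]_n :=
  if enorm v <= 1 then v else (enorm v)^-1 *: v.

(* TD^n = R^n / ~ , realised literally as the type of equivalence classes *)
Definition TD n : Type :=
  {A : set 'rV[R]_n | exists v : 'rV[R]_n, A = [set w | pi_set w = pi_set v]}.

Definition piTD n (v : 'rV[R]_n) : TD n :=
  exist _ [set w | pi_set w = pi_set v] (ex_intro _ v erefl).

(* Plots of the quotient diffeology: parametrizations P : U -> TD^n
   (U open in R^k; P is a total function whose values off U are irrelevant)
   that locally lift along pi_n to smooth maps into R^n. *)
Definition plotTD n k (U : set 'rV[R]_k) (P : 'rV[R]_k -> TD n) : Prop :=
  forall r, U r -> exists V : set 'rV[R]_k,
    [/\ open V, V r, V `<=` U &
     exists Q : 'rV[R]_k -> 'rV[R]_n,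
       smooth_on V Q /\ forall x, V x -> piTD (Q x) = P x].

Definition smoothTD n (g : TD n -> R) : Prop :=
  forall k (U : set 'rV[R]_k) (P : 'rV[R]_k -> TD n),
    open U -> plotTD U P -> smooth_on U (g \o P).

Definition reflexiveTD n : Prop :=
  forall k (U : set 'rV[R]_k) (P : 'rV[R]_k -> TD n), open U ->
    (forall g : TD n -> R, smoothTD g -> smooth_on U (g \o P)) ->
    plotTD U P.

Definition interval11 : set 'rV[R]_1 := [set x | -1 < x 0 0 < 1].

End Diffeology.
Arguments interval11 R : clear implicits.

From HB Require Import structures.
From mathcomp Require Import all_boot all_order all_algebra.
From mathcomp Require Import all_classical all_reals topology normedtype derive.
From mathcomp Require Import lra.
Set Implicit Arguments. Unset Strict Implicit. Unset Printing Implicit Defensive.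
Import Order.TTheory GRing.Theory Num.Theory.
Import numFieldNormedType.Exports.
Local Open Scope classical_set_scope.
Local Open Scope ring_scope.

(* The parametrization is the tent f(t) = pi_n((1 - |t|) u) with |u| = 1.
   Since pi_n(s u) = pi_n(u) for s >= 1, any g : TD^n -> R satisfies
   g(f(t)) = g(pi_n((1 - t) u)) + g(pi_n((1 + t) u)) - g(pi_n(u)), a sum of
   compositions of g with plots, hence smooth.  But pi_n is injective on the
   open unit ball, so a local smooth lift of f near 0 must equal
   t |-> (1 - |t|) u off 0, which has different one-sided derivatives there. *)

Section Ck.
Variable R : realType.
Implicit Types V W : normedModType R.

Lemma Ck_subset V W m (U1 U2 : set V) (f : V -> W) :
  U2 `<=` U1 -> Ck m U1 f -> Ck m U2 f.
Proof.
move=> sU; elim: m f => [|m IH] f /=; first by move=> h x /sU; exact: h.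
by move=> [df Ddf]; split => [x /sU|v]; [exact: df|exact: IH].
Qed.

Lemma Ck_cst V W m (U : set V) (c : W) : Ck m U (fun=> c).
Proof.
elim: m c => [|m IH] c /=; first by move=> x _; exact: cst_continuous.
split => [x _|v]; first exact: differentiable_cst.
have -> : (fun x => 'D_v (fun=> c) x) = (fun=> 0 : W).
  by apply: funext => x; exact: derive_cst.
exact: IH.
Qed.

Lemma CkD V W m (f g : V -> W) :
  Ck m setT f -> Ck m setT g -> Ck m setT (f \+ g).
Proof.
elim: m f g => [|m IH] f g /=.
  by move=> cf cg x _; apply: continuousD; [exact: cf|exact: cg].
move=> [df Ddf] [dg Ddg]; split => [x _|v]; first exact: differentiableD (df x I) (dg x I).
have -> : (fun x => 'D_v (f \+ g) x) = (fun x => 'D_v f x) \+ (fun x => 'D_v g x).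
  by apply: funext => x; rewrite deriveD //; exact: diff_derivable (_ x I).
exact: IH.
Qed.

Lemma Ck_linear V W m (L : {linear V -> W}) : continuous L -> Ck m setT L.
Proof.
move=> cL; case: m => [|m] /=; first by move=> x _; exact: cL.
split => [x _|v]; first exact: linear_differentiable.
have -> : (fun x => 'D_v L x) = (fun=> L v).
  by apply: funext => x; rewrite deriveE ?diff_lin //; exact: linear_differentiable.
exact: Ck_cst.
Qed.

End Ck.

Section Kink.
Variable R : realType.

Lemma at_right_dnbhs (x : R) : x^'+ `=>` x^'.
Proof. by apply: within_subset => y /gt_eqF /negbT; rewrite eq_sym. Qed.

Lemma at_left_dnbhs (x : R) : x^'- `=>` x^'.
Proof. by apply: within_subset => y /lt_eqF /negbT. Qed.

Lemma cvg_invZD (V : normedModType R) (F : set_system R) (q : R -> V) (w a D : V) :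
  ProperFilter F -> id @ F --> (0 : R) -> q @ F --> D ->
  (\forall h \near F, h != 0 /\ q h = h^-1 *: w + a) -> w = 0 /\ D = a.
Proof.
move=> PF F0 qD qE.
have hq0 : (fun h => h *: q h) @ F --> 0 *: D by exact: cvgZ F0 qD.
have hqw : (fun h => h *: q h) @ F --> w + 0 *: a.
  have hwa : (fun h => w + h *: a) @ F --> w + 0 *: a.
    by apply: cvgD; [exact: cvg_cst | exact: cvgZ F0 (cvg_cst a)].
  apply: cvg_trans hwa; apply: near_eq_cvg; apply: filterS qE => h [hn0 ->].
  by rewrite scalerDr scalerA mulfV // scale1r.
have w0 : w = 0.
  by have := cvg_unique _ hq0 hqw; rewrite !scale0r addr0 => <-.
have qa : q @ F --> a.
  by apply: cvg_near_cst; apply: filterS qE => h [_ ->]; rewrite w0 scaler0 add0r.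
by split => //; exact: cvg_unique _ qD qa.
Qed.

Lemma kink_not_derivable (W V : normedModType R) (Q : W -> V) (e : W) (u : V) :
  u != 0 -> (\forall h \near (0 : R)^', Q (h *: e) = (1 - `|h|) *: u) ->
  ~ derivable Q 0 e.
Proof.
move=> u0 QE /cvg_ex[/= D QD].
set q := (fun h : R => _) in QD.
(* the difference quotient is h^-1 (u - Q 0) - sgn(h) u *)
have qE : \forall h \near (0 : R)^', q h = h^-1 *: (u - Q 0) + - ((h^-1 * `|h|) *: u).
  apply: filterS QE => h Qh.
  by rewrite /q /= addr0 Qh scalerBl scale1r addrAC scalerBr scalerA.
have [_ Dr] : u - Q 0 = 0 /\ D = - u.
  apply: (@cvg_invZD _ 0^'+ q _ _ _ _ (cvg_at_right_filter cvg_id)).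
    exact: cvg_trans (cvg_app q (@at_right_dnbhs 0)) QD.
  move: (nbhs_right_gt (0 : R)) (at_right_dnbhs qE); apply: filterS2 => h h0 ->.
  by split; [exact: lt0r_neq0 | rewrite gtr0_norm // mulVf ?lt0r_neq0 // scale1r].
have [_ Dl] : u - Q 0 = 0 /\ D = u.
  apply: (@cvg_invZD _ 0^'- q _ _ _ _ (cvg_at_left_filter cvg_id)).
    exact: cvg_trans (cvg_app q (@at_left_dnbhs 0)) QD.
  move: (nbhs_left_lt (0 : R)) (at_left_dnbhs qE); apply: filterS2 => h h0 ->.
  split; first exact: ltr0_neq0.
  by rewrite ltr0_norm // mulrN mulVf ?ltr0_neq0 // scaleN1r opprK.
have : (2 : R) *: u == 0 by rewrite scaler_nat mulr2n -{1}Dl Dr addNr.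
by rewrite scaler_eq0 pnatr_eq0 (negbTE u0).
Qed.
End Kink.

Section TD.
Variable R : realType.

Lemma piTD_eqE n (v w : 'rV[R]_n) : piTD v = piTD w <-> pi_set v = pi_set w.
Proof.
split => [/(f_equal sval) /= vw | vw]; last by apply: eq_exist; rewrite vw.
by have : [set x | pi_set x = pi_set v] v by []; rewrite vw.
Qed.

Lemma enormZ n (k : R) (v : 'rV[R]_n) : enorm (k *: v) = `|k| * enorm v.
Proof.
rewrite /enorm; under eq_bigr do rewrite mxE exprMn.
by rewrite -mulr_sumr sqrtrM ?sqr_ge0 // sqrtr_sqr.
Qed.

Lemma enorm_delta_mx n (i : 'I_n) : enorm (delta_mx 0 i : 'rV[R]_n) = 1.
Proof.
rewrite /enorm (bigD1 i) //= big1 => [|j ji]; last by rewrite mxE (negbTE ji) andbF expr0n.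
by rewrite !mxE !eqxx expr1n addr0 sqrtr1.
Qed.

Lemma pi_set_le1 n (v : 'rV[R]_n) : enorm v <= 1 -> pi_set v = v.
Proof. by rewrite /pi_set => ->. Qed.

Lemma pi_set_lt1 n (v : 'rV[R]_n) : enorm (pi_set v) < 1 -> pi_set v = v.
Proof.
rewrite /pi_set; case: ifP => // /negbT; rewrite -ltNge => v1.
have v0 : 0 < enorm v by apply: lt_trans v1.
by rewrite enormZ ger0_norm ?invr_ge0 ?ltW // mulVf ?gt_eqF // ltxx.
Qed.

Lemma pi_setZ_ge1 n (s : R) (v : 'rV[R]_n) :
  enorm v = 1 -> 1 <= s -> pi_set (s *: v) = v.
Proof.
move=> v1 s1; have s0 : 0 < s by apply: lt_le_trans s1.
rewrite /pi_set enormZ v1 mulr1 gtr0_norm //; case: ifP => [s1' | _].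
  have -> : s = 1 by apply/eqP; rewrite eq_le s1 s1'.
  by rewrite scale1r.
by rewrite scalerA mulVf ?gt_eqF // scale1r.
Qed.

Lemma piTD_inj_ball n (v w : 'rV[R]_n) : enorm v < 1 -> piTD w = piTD v -> w = v.
Proof.
move=> v1 /piTD_eqE wv; have vv : pi_set v = v by apply/pi_set_le1/ltW.
by rewrite -vv -wv pi_set_lt1 // wv vv.
Qed.

Lemma plotTD_lift k n (Q : 'rV[R]_k -> 'rV[R]_n) :
  smooth_on setT Q -> plotTD setT (fun x => piTD (Q x)).
Proof.
move=> sQ r _; exists setT; split => //; first exact: openT.
by exists Q.
Qed.

Lemma smooth_on_line n (a w : 'rV[R]_n) :
  smooth_on setT (fun x : 'rV[R]_1 => a + x 0 0 *: w).
Proof.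
pose L (x : 'rV[R]_1) := x 0 0 *: w.
have L_linear : linear L by move=> c x y; rewrite /L !mxE scalerDl scalerA.
pose Ll : {linear 'rV[R]_1 -> 'rV[R]_n} := HB.pack L (GRing.isLinear.Build _ _ _ _ L L_linear).
have cL : continuous Ll by move=> x; apply: continuousZr_tmp; exact: coord_continuous.
by move=> m; apply: CkD; [exact: Ck_cst | exact: Ck_linear cL].
Qed.

Lemma open_interval11 : open (interval11 R).
Proof.
have -> : interval11 R = (fun x : 'rV[R]_1 => x 0 0) @^-1` `](-1), 1[.
  by apply: funext => x; rewrite /interval11 /= in_itv.
by apply/(continuousP _).1; [exact: coord_continuous | exact: itv_open].
Qed.

End TD.

Lemma sub_normr_split (R : realDomainType) (T : zmodType) (phi : R -> T) (c : R) :
  (forall s, c <= s -> phi s = phi c) ->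
  forall x, phi (c - `|x|) = phi (c - x) + phi (c + x) - phi c.
Proof.
move=> phiE x; case: (leP 0 x) => x0.
  by rewrite ger0_norm // (phiE (c + x)) ?lerDl // addrK.
rewrite ltr0_norm // opprK (phiE (c - x)) ?lerDl ?oppr_ge0 ?ltW //.
by rewrite addrAC subrr add0r.
Qed.

Section Tent.
Variables (R : realType) (n : nat) (u : 'rV[R]_n).
Hypothesis u1 : enorm u = 1.

Definition tent (x : 'rV[R]_1) : TD R n := piTD ((1 - `|x 0 0|) *: u).

Lemma smooth_comp_tent (g : TD R n -> R) :
  smoothTD g -> smooth_on (interval11 R) (g \o tent).
Proof.
move=> sg; pose phi s := g (piTD (s *: u)).
have g_line a w : smooth_on setT (fun x : 'rV[R]_1 => g (piTD (a + x 0 0 *: w))).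
  exact: sg _ _ _ openT (plotTD_lift (smooth_on_line a w)).
have phiE s : 1 <= s -> phi s = phi 1.
  by move=> s1; rewrite /phi; congr g; apply/piTD_eqE; rewrite !pi_setZ_ge1.
have -> : g \o tent = (fun x : 'rV[R]_1 => g (piTD (u + x 0 0 *: - u))) \+
    (fun x : 'rV[R]_1 => g (piTD (u + x 0 0 *: u))) \+ (fun=> - phi 1).
  apply: funext => x; rewrite /= /tent -/(phi _) sub_normr_split //.
  by rewrite /phi scalerBl scalerDl scale1r scalerN.
move=> m; apply: (@Ck_subset _ _ _ _ setT) => //.
by apply: CkD; [apply: CkD; exact: g_line | exact: Ck_cst].
Qed.

Lemma tent_not_plot : ~ plotTD (interval11 R) tent.
Proof.
have i0 : interval11 R 0 by rewrite /interval11 /= mxE; lra.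
move=> /(_ 0 i0)[V [oV V0 VI [Q [sQ QE]]]].
have u0 : u != 0.
  apply/eqP => u_0; move: u1; rewrite u_0 -(scale0r (0 : 'rV[R]_n)) enormZ normr0 mul0r.
  by move/eqP; rewrite eq_sym oner_eq0.
apply: (kink_not_derivable (e := const_mx 1) u0); last first.
  exact/diff_derivable/((sQ 1%N).1 0 V0).
have lineV : \forall h \near (0 : R), V (h *: (const_mx 1 : 'rV[R]_1)).
  have line0 : (fun h : R => h *: (const_mx 1 : 'rV[R]_1)) @ 0 --> (0 : 'rV[R]_1).
    rewrite -(scale0r (const_mx 1 : 'rV[R]_1)); apply: cvgZr_tmp; exact: cvg_id.
  by apply: line0; apply: open_nbhs_nbhs; split.
move: (nbhs_dnbhs lineV) (nbhs_dnbhs_neq (0 : R)); apply: filterS2 => h hV h0.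
have h1 : (h *: (const_mx 1 : 'rV[R]_1)) 0 0 = h by rewrite !mxE mulr1.
apply: piTD_inj_ball; last by rewrite QE // /tent h1.
have := VI _ hV; rewrite /interval11 /= h1 => /andP[hgt hlt].
have : 0 < `|h| < 1 by rewrite normr_gt0 h0 ltr_norml hgt hlt.
by rewrite enormZ u1 mulr1 => /andP[? ?]; rewrite ger0_norm; lra.
Qed.

End Tent.

Theorem proposition8p3 (R : realType) (n : nat) (hn : (0 < n)%N) :
  ~ reflexiveTD R n /\
  exists f : 'rV[R]_1 -> TD R n,
    (forall g : TD R n -> R, smoothTD g -> smooth_on (interval11 R) (g \o f)) /\
    ~ plotTD (interval11 R) f.
Proof.
case: n hn => // n _.
have u1 := enorm_delta_mx R (ord0 : 'I_n.+1).
split; last by exists (tent (delta_mx 0 ord0)); split;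
  [exact: smooth_comp_tent | exact: tent_not_plot].
move=> reflexive; apply: (tent_not_plot u1).
by apply: reflexive; [exact: open_interval11 | exact: smooth_comp_tent].
Qed.
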